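(* Let $\mu>0$, $k>0$, $y(x)=-k(1-x)$, and let $x_l$, $m(x)$ and $N(x,\xi)$ be as in the context. Then $\partial_\xi N(x,\xi)>0$ for every $x\in(x_l,1)$ and every $\xi\in(0,1)$.
   Context: Let $g(u)=u^2(1-u)$ and $G(u)=u^3/3-u^4/4$ for $u\in[0,1]$. Let $x_l\in(0,1)$ be the abscissa of the unique intersection in $(0,1)$ of the line $v=y(u)$ with the curve $v^2=2\mu G(u)$, $v<0$. For $x\in(x_l,1)$, $m(x)\in(0,x)$ is the unique number with $2\mu G(m(x))=2\mu G(x)-y(x)^2$; $m$ is $\mathcal{C}^1$. Define, for $x\in(x_l,1)$ and $\xi\in[0,1]$, writing $z=x-(x-m(x))\xi$, $$N(x,\xi)=(1-m'(x))\bigl(y(x)^2+2\mu(G(z)-G(x))\bigr)-(x-m(x))\Bigl(y(x)y'(x)+\mu\bigl(g(z)\,(1-(1-m'(x))\xi)-g(x)\bigr)\Bigr).$$ *)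

From Stdlib Require Import Reals.
From Coquelicot Require Import Coquelicot.
Open Scope R_scope.

Definition g (u : R) : R := u ^ 2 * (1 - u).
Definition G (u : R) : R := u ^ 3 / 3 - u ^ 4 / 4.

Definition y (k : R) (x : R) : R := - k * (1 - x).

Definition Nfun (mu k : R) (m : R -> R) (x xi : R) : R :=
  let z := x - (x - m x) * xi in
  let m' := Derive m x in
  (1 - m') * (y k x ^ 2 + 2 * mu * (G z - G x))
  - (x - m x) * (y k x * Derive (y k) x
                 + mu * (g z * (1 - (1 - m') * xi) - g x)).

From Stdlib Require Import Reals Lra Psatz.
From Coquelicot Require Import Coquelicot.
Open Scope R_scope.

(* Differentiating in [xi] gives [d_xi N = mu (x - m) E], with [E] affine in
   [m' = m'(x)].  Differentiating the identity [2 mu G(m) = 2 mu G(x) - y(x)^2]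
   and using it once more eliminates [mu] and [k]:
   [(1 - x) m' g(m) = (1 - x) g(x) + 2 (G(x) - G(m))].  After this substitution,
   [6 (1 - x) g(m) E] is [(x - m)] times a polynomial with nonnegative
   coefficients in the positive quantities [1 - x], [x - m], [m], [xi], [1 - xi]. *)

Definition dNdxi_factor (x mx m' xi : R) : R :=
  let d := x - mx in
  let z := x - d * xi in
  (m' - 1) * g z + d * (2 * z - 3 * z ^ 2) * (1 - (1 - m') * xi).

Lemma Derive_Nfun_xi (mu k : R) (m : R -> R) (x xi : R) :
  Derive (fun t => Nfun mu k m x t) xi
  = mu * (x - m x) * dNdxi_factor x (m x) (Derive m x) xi.
Proof.
  apply is_derive_unique.
  unfold Nfun, dNdxi_factor, g, G.
  auto_derive; [exact I | field].
Qed.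

Lemma slope_relation (mu k : R) (m : R -> R) (x : R) :
  0 < mu -> ex_derive m x ->
  locally x (fun t => 2 * mu * G (m t) = 2 * mu * G t - y k t ^ 2) ->
  (1 - x) * Derive m x * g (m x) = (1 - x) * g x + 2 * (G x - G (m x)).
Proof.
  intros Hmu Hex Hlevel.
  assert (Hlhs : is_derive (fun t => 2 * mu * G t - y k t ^ 2) x
                   (Derive m x * (2 * mu * g (m x)))).
  { apply (is_derive_ext_loc (fun t => 2 * mu * G (m t))); [exact Hlevel |].
    apply (is_derive_comp (fun u => 2 * mu * G u) m); [| now apply Derive_correct].
    unfold G, g. auto_derive; [exact I | field]. }
  assert (Hrhs : is_derive (fun t => 2 * mu * G t - y k t ^ 2) x
                   (2 * mu * g x + 2 * k ^ 2 * (1 - x))).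
  { unfold G, g, y. auto_derive; [exact I | field]. }
  pose proof (is_derive_unique _ _ _ Hlhs) as Hderiv.
  rewrite (is_derive_unique _ _ _ Hrhs) in Hderiv.
  pose proof (locally_singleton _ _ Hlevel) as Hx. simpl in Hx.
  assert (Hlevel_x : 2 * mu * (G x - G (m x)) = k ^ 2 * (1 - x) ^ 2).
  { unfold y in Hx. replace (k ^ 2 * (1 - x) ^ 2) with ((- k * (1 - x)) ^ 2) by ring.
    lra. }
  apply (Rmult_eq_reg_l (2 * mu)); [| lra].
  transitivity ((1 - x) * (Derive m x * (2 * mu * g (m x)))); [ring |].
  rewrite <- Hderiv.
  transitivity (2 * mu * (1 - x) * g x + 2 * (2 * mu * (G x - G (m x)))); [| ring].
  rewrite Hlevel_x. ring.
Qed.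

(* [6 (1 - x) g(m) E / (x - m)] with [m'] eliminated, homogenized with
   [s + d + m = 1] and [X + Y = 1] so that every coefficient is nonnegative. *)
Definition certificate (s d m X Y : R) : R :=
  12*d^3*m^3*X^2*Y + 12*d^3*m^3*X^3 + 20*d^4*m^2*X^2*Y + 8*d^4*m^2*X^3
  + 10*d^5*m*X^2*Y + 2*d^5*m*X^3 + 2*d^6*X^2*Y + 4*s*d^2*m^3*Y^3
  + 36*s*d^2*m^3*X*Y^2 + 72*s*d^2*m^3*X^2*Y + 40*s*d^2*m^3*X^3
  + 9*s*d^3*m^2*Y^3 + 51*s*d^3*m^2*X*Y^2 + 87*s*d^3*m^2*X^2*Y
  + 33*s*d^3*m^2*X^3 + 6*s*d^4*m*Y^3 + 18*s*d^4*m*X*Y^2 + 46*s*d^4*m*X^2*Y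
  + 10*s*d^4*m*X^3 + 1*s*d^5*Y^3 + 3*s*d^5*X*Y^2 + 10*s*d^5*X^2*Y
  + 24*s^2*d*m^3*Y^3 + 96*s^2*d*m^3*X*Y^2 + 120*s^2*d*m^3*X^2*Y
  + 48*s^2*d*m^3*X^3 + 40*s^2*d^2*m^2*Y^3 + 132*s^2*d^2*m^2*X*Y^2
  + 144*s^2*d^2*m^2*X^2*Y + 52*s^2*d^2*m^2*X^3 + 20*s^2*d^3*m*Y^3
  + 60*s^2*d^3*m*X*Y^2 + 84*s^2*d^3*m*X^2*Y + 20*s^2*d^3*m*X^3
  + 4*s^2*d^4*Y^3 + 12*s^2*d^4*X*Y^2 + 20*s^2*d^4*X^2*Y + 24*s^3*m^3*Y^3
  + 72*s^3*m^3*X*Y^2 + 72*s^3*m^3*X^2*Y + 24*s^3*m^3*X^3 + 42*s^3*d*m^2*Y^3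
  + 114*s^3*d*m^2*X*Y^2 + 102*s^3*d*m^2*X^2*Y + 30*s^3*d*m^2*X^3
  + 24*s^3*d^2*m*Y^3 + 72*s^3*d^2*m*X*Y^2 + 60*s^3*d^2*m*X^2*Y
  + 12*s^3*d^2*m*X^3 + 6*s^3*d^3*Y^3 + 18*s^3*d^3*X*Y^2 + 12*s^3*d^3*X^2*Y.

Lemma certificate_pos (s d m X Y : R) :
  0 < s -> 0 < d -> 0 < m -> 0 < X -> 0 < Y -> 0 < certificate s d m X Y.
Proof.
  intros. unfold certificate.
  repeat apply Rplus_lt_0_compat;
    repeat apply Rmult_lt_0_compat; try apply pow_lt; lra.
Qed.

Lemma dNdxi_factor_pos (x mx m' xi : R) :
  0 < mx < x -> x < 1 -> 0 < xi < 1 ->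
  (1 - x) * m' * g mx = (1 - x) * g x + 2 * (G x - G mx) ->
  0 < dNdxi_factor x mx m' xi.
Proof.
  intros Hmx Hx Hxi Hslope.
  assert (Hgmx : 0 < g mx) by (unfold g; apply Rmult_lt_0_compat; nra).
  assert (Hscale : 0 < 6 * (1 - x) * g mx) by (apply Rmult_lt_0_compat; lra).
  assert (Hm' : m' = ((1 - x) * g x + 2 * (G x - G mx)) / ((1 - x) * g mx)).
  { rewrite <- Hslope. field. split; lra. }
  assert (Hcleared : 6 * (1 - x) * g mx * dNdxi_factor x mx m' xi
                     = (x - mx) * certificate (1 - x) (x - mx) mx xi (1 - xi)).
  { subst m'. unfold dNdxi_factor, certificate, g, G.
    field. unfold g in Hgmx. split; nra. }
  apply (Rmult_lt_reg_l _ _ _ Hscale).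
  rewrite Rmult_0_r, Hcleared.
  apply Rmult_lt_0_compat; [lra |].
  apply certificate_pos; lra.
Qed.

Theorem lemmaA2 (mu k xl : R) (m : R -> R) :
  0 < mu -> 0 < k ->
  (* xl : abscissa of the intersection in (0,1) of v = y(u) with v^2 = 2 mu G(u), v < 0 *)
  0 < xl < 1 -> y k xl < 0 -> (y k xl) ^ 2 = 2 * mu * G xl ->
  (* m(x) : the number in (0,x) with 2 mu G(m(x)) = 2 mu G(x) - y(x)^2 *)
  (forall x, xl < x < 1 ->
     0 < m x < x /\ 2 * mu * G (m x) = 2 * mu * G x - (y k x) ^ 2) ->
  (* m is C^1 on (xl,1) *)
  (forall x, xl < x < 1 -> ex_derive m x /\ continuous (Derive m) x) ->
  forall x xi, xl < x < 1 -> 0 < xi < 1 ->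
    Derive (fun t => Nfun mu k m x t) xi > 0.
Proof.
  intros Hmu _ _ _ _ Hm Hdm x xi Hx Hxi.
  destruct (Hm x Hx) as [Hmx _].
  assert (Hlevel : locally x (fun t => 2 * mu * G (m t) = 2 * mu * G t - y k t ^ 2)).
  { apply (locally_interval _ x xl 1); simpl; try lra.
    intros t Ht1 Ht2. apply Hm. lra. }
  pose proof (slope_relation mu k m x Hmu (proj1 (Hdm x Hx)) Hlevel) as Hslope.
  rewrite Derive_Nfun_xi.
  apply Rlt_gt, Rmult_lt_0_compat; [apply Rmult_lt_0_compat; lra |].
  apply dNdxi_factor_pos; [exact Hmx | lra | exact Hxi | exact Hslope].
Qed.
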